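(* Let $(R,\mathfrak{m})$ be an almost setup. For every $t\in\mathbb{N}$ let $$C_t\colon\ 0\to M_{t,1}\xrightarrow{\varphi_t}M_{t,2}\xrightarrow{\psi_t}M_{t,3}$$ be a complex of $R$-modules, and for $t\ge1$ and $i=1,2,3$ let $\omega_t\colon M_{t,i}\to M_{t-1,i}$ be $R$-linear maps such that all resulting squares commute. If every $C_t$ is almost exact, then the inverse limit complex $\varprojlim_{t\in\mathbb{N}}C_t$ is almost exact as well.
   Context: An almost setup is a pair $(R,\mathfrak{m})$ of a commutative ring $R$ and an ideal $\mathfrak{m}$ with $\mathfrak{m}^2=\mathfrak{m}$ and $\mathfrak{m}\otimes_R\mathfrak{m}$ flat over $R$. An $R$-module $N$ is almost zero if $\mathfrak{m}N=0$. A complex of $R$-modules is almost exact if its cohomology modules are almost zero (equivalently, it becomes exact in the quotient category of almost $R$-modules). *)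

From HB Require Import structures.
From mathcomp Require Import all_boot all_order all_algebra.
Set Implicit Arguments. Unset Strict Implicit. Unset Printing Implicit Defensive.
Import Order.TTheory GRing.Theory Num.Theory.
Local Open Scope ring_scope.

Section Almost.
Variable R : comPzRingType.

Definition is_ideal (m : {pred R}) : Prop :=
  [/\ 0 \in m,
      (forall x y, x \in m -> y \in m -> x + y \in m) &
      (forall r x, x \in m -> r * x \in m)].

(** m^2 = m : every element of m is a finite sum of products of two
    elements of m (the inclusion m^2 <= m holds for any ideal). *)
Definition ideal_idempotent (m : {pred R}) : Prop :=
  forall x, x \in m -> exists n (a b : 'I_n -> R),
    (forall i, a i \in m) /\ (forall i, b i \in m) /\ x = \sum_(i < n) a i * b i.

Definition bilinear_on (A B N : lmodType R) (PA : {pred A}) (PB : {pred B})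
  (b : A -> B -> N) : Prop :=
  (forall r x x' y, x \in PA -> x' \in PA -> y \in PB ->
     b (r *: x + x') y = r *: b x y + b x' y) /\
  (forall r x y y', x \in PA -> y \in PB -> y' \in PB ->
     b x (r *: y + y') = r *: b x y + b x y').

Definition is_tensor (A B T : lmodType R) (PA : {pred A}) (PB : {pred B})
  (b : A -> B -> T) : Prop :=
  bilinear_on PA PB b /\
  (forall (N : lmodType R) (beta : A -> B -> N), bilinear_on PA PB beta ->
     exists g : {linear T -> N},
       forall x y, x \in PA -> y \in PB -> g (b x y) = beta x y) /\
  (forall (N : lmodType R) (g g' : {linear T -> N}),
     (forall x y, x \in PA -> y \in PB -> g (b x y) = g' (b x y)) ->
     g =1 g').

Definition flat (T : lmodType R) : Prop :=
  forall (N' N : lmodType R) (f : {linear N' -> N}), injective f ->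
  forall (P' P : lmodType R) (b' : T -> N' -> P') (b : T -> N -> P),
    is_tensor predT predT b' -> is_tensor predT predT b ->
    forall h : {linear P' -> P},
      (forall t n, h (b' t n) = b t (f n)) -> injective h.

Definition almost_setup (m : {pred R}) : Prop :=
  [/\ is_ideal m, ideal_idempotent m &
      exists (T : lmodType R) (b : R^o -> R^o -> T),
        is_tensor (A := R^o) (B := R^o) m m b /\ flat T].

(** The complex 0 -> M1 -(phi)-> M2 -(psi)-> M3 is almost exact:
    its cohomology at M1 and M2 is killed by m. *)
Definition almost_exact (m : {pred R}) (M1 M2 M3 : lmodType R)
  (phi : M1 -> M2) (psi : M2 -> M3) : Prop :=
  (forall a x, a \in m -> phi x = 0 -> a *: x = 0) /\
  (forall a y, a \in m -> psi y = 0 -> exists x, phi x = a *: y).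

(** Elements of the inverse limit of a tower (M t, omega t : M (t+1) -> M t). *)
Definition compatible (M : nat -> lmodType R)
  (omega : forall t, M t.+1 -> M t) (x : forall t, M t) : Prop :=
  forall t, omega t (x t.+1) = x t.

End Almost.

From HB Require Import structures.
From mathcomp Require Import all_boot all_order all_algebra.
From Stdlib Require Import ClassicalEpsilon.
Set Implicit Arguments. Unset Strict Implicit.
Local Open Scope ring_scope.
Import GRing.Theory.

(* Write a = \sum_i u_i v_i with u_i, v_i in m, using m = m^2 (the only part
   of the almost setup needed). At each level choose preimages x_{t,i} of
   v_i y_t. They need not form a compatible family, but any two preimages of
   the same element differ by an element of ker phi_t, which u_i kills; hence
   the u_i x_{t,i} are compatible, and their sum over i is a compatible
   preimage of a y. *)

Section SingleComplex.
Variables (R : comPzRingType) (m : {pred R}) (M1 M2 M3 : lmodType R).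
Variables (phi : {linear M1 -> M2}) (psi : M2 -> M3).
Hypothesis exact_phi_psi : almost_exact m phi psi.

Lemma almost_exact_scale_fiber a (x x' : M1) :
  a \in m -> phi x = phi x' -> a *: x = a *: x'.
Proof.
move=> am e; apply/eqP; rewrite -subr_eq0 -scalerBr; apply/eqP.
by apply: (proj1 exact_phi_psi) am _; rewrite raddfB /= e subrr.
Qed.

End SingleComplex.

Lemma compatible_sum (R : comPzRingType) (M : nat -> lmodType R)
    (omega : forall t, {linear M t.+1 -> M t}) n (x : 'I_n -> forall t, M t) :
  (forall i, compatible omega (x i)) ->
  compatible omega (fun t => \sum_(i < n) x i t).
Proof. by move=> cx t; rewrite raddf_sum; apply: eq_bigr => i _; apply: cx. Qed.

Section Tower.
Variables (R : comPzRingType) (m : {pred R}) (M1 M2 M3 : nat -> lmodType R).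
Variables (phi : forall t, {linear M1 t -> M2 t}) (psi : forall t, {linear M2 t -> M3 t}).
Variables (om1 : forall t, {linear M1 t.+1 -> M1 t})
          (om2 : forall t, {linear M2 t.+1 -> M2 t}).
Hypothesis phi_om : forall t x, phi t (om1 t x) = om2 t (phi t.+1 x).
Hypothesis exact_tower : forall t, almost_exact m (phi t) (psi t).
Variable y : forall t, M2 t.
Hypothesis compatible_y : compatible om2 y.
Hypothesis psi_y : forall t, psi t (y t) = 0.

Lemma levelwise_preimage b :
  b \in m -> exists x : forall t, M1 t, forall t, phi t (x t) = b *: y t.
Proof.
move=> bm.
exists (fun t => proj1_sig (constructive_indefinite_description _
  (proj2 (exact_tower t) b (y t) bm (psi_y t)))).
by move=> t; case: constructive_indefinite_description.
Qed.

Lemma compatible_product_preimage b c :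
  b \in m -> c \in m -> exists x : forall t, M1 t,
    compatible om1 x /\ forall t, phi t (x t) = (c * b) *: y t.
Proof.
move=> bm cm; have [x phi_x] := levelwise_preimage bm.
exists (fun t => c *: x t); split => t; last by rewrite linearZ /= phi_x scalerA.
rewrite linearZ /=.
apply: (almost_exact_scale_fiber (phi := phi t) (exact_tower t) cm).
by rewrite phi_om !phi_x linearZ /= compatible_y.
Qed.

End Tower.

Theorem lemmaB4 (R : comPzRingType) (m : {pred R})
  (M1 M2 M3 : nat -> lmodType R)
  (phi : forall t, {linear M1 t -> M2 t})
  (psi : forall t, {linear M2 t -> M3 t})
  (om1 : forall t, {linear M1 t.+1 -> M1 t})
  (om2 : forall t, {linear M2 t.+1 -> M2 t})
  (om3 : forall t, {linear M3 t.+1 -> M3 t}) :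
  almost_setup m ->
  (forall t x, psi t (phi t x) = 0) ->
  (forall t x, phi t (om1 t x) = om2 t (phi t.+1 x)) ->
  (forall t y, psi t (om2 t y) = om3 t (psi t.+1 y)) ->
  (forall t, almost_exact m (phi t) (psi t)) ->
  (* almost exactness of the inverse limit complex
     0 -> lim M1 -> lim M2 -> lim M3, written out on compatible families *)
  (forall a (x : forall t, M1 t), a \in m -> compatible om1 x ->
     (forall t, phi t (x t) = 0) -> forall t, a *: x t = 0) /\
  (forall a (y : forall t, M2 t), a \in m -> compatible om2 y ->
     (forall t, psi t (y t) = 0) ->
     exists x : forall t, M1 t, compatible om1 x /\
       forall t, phi t (x t) = a *: y t).
Proof.
move=> [_ m_idem _] _ phi_om _ exact_tower; split.
  by move=> a x am _ phi_x t; apply: (proj1 (exact_tower t)) am (phi_x t).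
move=> a y am cy psi_y.
have [n [u [v [um [vm ->]]]]] := m_idem a am.
have [x /all_and2 [cx phi_x]] := fin_all_exists (fun i =>
  compatible_product_preimage phi_om exact_tower cy psi_y (vm i) (um i)).
exists (fun t => \sum_(i < n) x i t); split; first exact: compatible_sum.
move=> t; rewrite raddf_sum scaler_suml; apply: eq_bigr => i _; exact: phi_x.
Qed.
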